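(* Let $S=[B_{r-1},[B_r,F_X^+]_q]_q$ and $S^\tau=[B_{\tau(r-1)},[B_{\tau(r)},F_X^-]_q]_q$, and let $\mathcal Z_r=-(1-q^{-2})E_X^+L_{\tau(r)}$, $\mathcal Z_{\tau(r)}=-(1-q^{-2})E_X^-L_r$. Then $\mathcal Z_{\tau(r)}S=q^{-1}S\mathcal Z_{\tau(r)}+(1-q^{-2})[B_{r-1},B_r]_qL_rK_X$ and $\mathcal Z_rS^\tau=q^{-1}S^\tau\mathcal Z_r+(1-q^{-2})[B_{\tau(r-1)},B_{\tau(r)}]_qL_{\tau(r)}K_X$ hold in $B_{\mathbf c}$.
   Context: Let $\mathbb K$ be a field of characteristic zero and $q$ an indeterminate. $n\ge1$, $I=\{1,\dots,n\}$, $\mathfrak g=\mathfrak{sl}_{n+1}(\mathbb C)$, simple roots $\alpha_i$, fundamental weights $\varpi_i$, weight lattice $P$, Cartan matrix $a_{ii}=2$, $a_{ij}=-1$ if $|i-j|=1$, else $0$, form $(\alpha_i,\alpha_j)=a_{ij}$, $(\alpha_i,\varpi_j)=\delta_{ij}$. $U_q(\mathfrak g)$ is the $\mathbb K(q^{1/2})$-algebra generated by $E_i,F_i,K_\mu$ ($\mu\in P$) with $K_0=1$, $K_\mu K_\lambda=K_{\mu+\lambda}$, $K_\mu E_i=q^{(\alpha_i,\mu)}E_iK_\mu$, $K_\mu F_i=q^{-(\alpha_i,\mu)}F_iK_\mu$, $E_iF_j-F_jE_i=\delta_{ij}\frac{K_i-K_i^{-1}}{q-q^{-1}}$ ($K_i=K_{\alpha_i}$),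 and the quantum Serre relations. $[a,b]_c=ab-cba$. Fix $r$ with $2\le r\le\lceil n/2\rceil-1$, $X=\{r+1,\dots,n-r\}$, $\tau(i)=n-i+1$ (on weights $\varpi_i\mapsto\varpi_{\tau(i)}$). $E_X^+=[E_{r+1},[\dots,[E_{n-r-1},E_{n-r}]_{q^{-1}}\dots]_{q^{-1}}]_{q^{-1}}$, $E_X^-=[E_{n-r},[\dots,[E_{r+2},E_{r+1}]_{q^{-1}}\dots]_{q^{-1}}]_{q^{-1}}$, $F_X^+=[F_{r+1},[\dots,[F_{n-r-1},F_{n-r}]_q\dots]_q]_q$, $F_X^-=[F_{n-r},[\dots,[F_{r+2},F_{r+1}]_q\dots]_q]_q$ (equal to $E_{r+1}$, $F_{r+1}$ if $|X|=1$); $K_X=K_{r+1}\cdots K_{n-r}$; $L_i=K_iK_{\tau(i)}^{-1}$. $\mathcal M_X$ is generated by $E_j,F_j,K_j^{\pm1}$ ($j\in X$); $U^0_\Theta$ by the $K_\mu$ with $-w_X\tau(\mu)=\mu$ ($w_X$ longest element of the parabolic Weyl subgroup for $X$). Parameters $c_i\in\mathbb K(q^{1/2})^\times$ ($i\in I\setminus X$) with $c_i=c_{\tau(i)}$ for $i\notin X\cup\{r,\tau(r)\}$. $B_i=F_i-c_iE_{\tau(i)}K_i^{-1}$ for $i\in I\setminus(X\cup\{r,\tau(r)\})$, $B_r=F_r-c_r[E_X^+,E_{\tau(r)}]_{q^{-1}}K_r^{-1}$, $B_{\tau(r)}=F_{\tau(r)}-c_{\tau(r)}[E_X^-,E_r]_{q^{-1}}K_{\tau(r)}^{-1}$;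 $B_{\mathbf c}$ is the subalgebra generated by $\mathcal M_X$, $U^0_\Theta$ and the $B_i$. *)

(* Quantum group U_q(sl_{n+1}) presented by generators and
   relations; identities in U_q are stated via its universal property:
   they must hold for every algebra A with elements satisfying the defining
   relations. *)
From HB Require Import structures.
From mathcomp Require Import all_boot all_order all_algebra.
Set Implicit Arguments. Unset Strict Implicit. Unset Printing Implicit Defensive.
Import Order.TTheory GRing.Theory Num.Theory.
Local Open Scope ring_scope.

(* Cartan matrix of type A_n (indices are natural numbers 1..n). *)
Definition cartan (i j : nat) : int :=
  if i == j then 2 else if (i == j.+1) || (j == i.+1) then -1 else 0.

(* Weights: mu : 'rV[int]_n, where mu 0 j is the coefficient of varpi_{j+1}. *)
Definition varpi (n i : nat) : 'rV[int]_n := \row_(j < n) ((j.+1 == i) : nat)%:Z.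
Definition alpha (n i : nat) : 'rV[int]_n := \row_(j < n) cartan i j.+1.
(* (alpha_i, mu) = coefficient of varpi_i in mu *)
Definition apair (n : nat) (i : nat) (mu : 'rV[int]_n) : int :=
  \sum_(j < n | j.+1 == i) mu 0 j.

Definition tau (n i : nat) : nat := n.+1 - i.
Definition Xseq (n r : nat) : seq nat := iota r.+1 (n - r.*2).

Section Uq.
Variables (R : fieldType) (A : algType R).

Definition qcomm (c : R) (a b : A) : A := a * b - c *: (b * a).

Fixpoint qnest (c : R) (G : nat -> A) (s : seq nat) : A :=
  match s with
  | [::] => 0
  | x :: s' => match s' with
               | [::] => G x
               | _ => qcomm c (G x) (qnest c G s')
               end
  end.

Definition Uq_relations (n : nat) (q : R) (E F : nat -> A)
  (K : 'rV[int]_n -> A) : Prop :=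
  K 0 = 1 /\
      (forall mu la, K (mu + la) = K mu * K la) /\
      (forall mu i, (0 < i <= n)%N ->
          K mu * E i = q ^ (apair i mu) *: (E i * K mu)) /\
      (forall mu i, (0 < i <= n)%N ->
          K mu * F i = q ^ (- apair i mu) *: (F i * K mu)) /\
      (forall i j, (0 < i <= n)%N -> (0 < j <= n)%N ->
          E i * F j - F j * E i =
          if i == j then (q - q^-1)^-1 *: (K (alpha n i) - K (- alpha n i))
          else 0) /\
      (forall i j, (0 < i <= n)%N -> (0 < j <= n)%N -> i != j ->
          (cartan i j = 0 -> E i * E j = E j * E i /\ F i * F j = F j * F i) /\
          (cartan i j = -1 ->
             E i ^+ 2 * E j - (q + q^-1) *: (E i * E j * E i) + E j * E i ^+ 2 = 0
          /\ F i ^+ 2 * F j - (q + q^-1) *: (F i * F j * F i) + F j * F i ^+ 2 = 0)).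

Variables (n r : nat) (q : R) (c : nat -> R) (E F : nat -> A)
          (K : 'rV[int]_n -> A).

Definition EXp : A := qnest q^-1 E (Xseq n r).
Definition EXm : A := qnest q^-1 E (rev (Xseq n r)).
Definition FXp : A := qnest q F (Xseq n r).
Definition FXm : A := qnest q F (rev (Xseq n r)).
Definition Kinv (i : nat) : A := K (- alpha n i).
Definition Lw (i : nat) : A := K (alpha n i - alpha n (tau n i)).
Definition KX : A := K (\sum_(j <- Xseq n r) alpha n j).

(* B_i for i not in X \cup {r, tau r} *)
Definition Bgen (i : nat) : A := F i - c i *: (E (tau n i) * Kinv i).
Definition Br : A := F r - c r *: (qcomm q^-1 EXp (E (tau n r)) * Kinv r).
Definition Btr : A :=
  F (tau n r) - c (tau n r) *: (qcomm q^-1 EXm (E r) * Kinv (tau n r)).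

End Uq.

From HB Require Import structures.
From mathcomp Require Import all_boot all_order all_algebra.
From mathcomp Require Import ring zify.
Set Implicit Arguments. Unset Strict Implicit. Unset Printing Implicit Defensive.
Import Order.TTheory GRing.Theory Num.Theory.
Local Open Scope ring_scope.

(* Write M = E_X^-, L = L_r, B = B_(r-1), B' = B_r and Y = F_X^+.  The first identity is a
   formal consequence, valid in any algebra, of a few q-commutation relations: M commutes
   with B and B', [M, Y] = (K_X - K_X^-1)/(q - q^-1) because M and Y are the root vectors of
   the A-string X, and L, K_X, K_X^-1 q-commute with B, B' and Y with exponents read off from
   the Cartan matrix.  The only delicate relation is M B' = B' M: by the Serre relations M
   q-commutes with [E_X^+, E_tau(r)]_(q^-1) with factor q, which K_r^-1 compensates.  The
   second identity is the image of the first under the diagram automorphism tau, which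
   preserves the defining relations. *)

(** * A normalizer for noncommutative polynomials in q *)

Inductive cexpr :=
  | CPow of int | CInvDiff | CInvSum | C0 | C1
  | CAdd of cexpr & cexpr | COpp of cexpr | CMul of cexpr & cexpr.

Inductive ncexpr :=
  | NVar of nat | N0 | N1
  | NAdd of ncexpr & ncexpr | NOpp of ncexpr | NMul of ncexpr & ncexpr
  | NScale of cexpr & ncexpr.

(* [(w, e, d, s, k)] stands for [k q^e (q - q^-1)^-d (q + q^-1)^-s x_w1 ... x_wm]. *)
Definition monom := (seq nat * int * nat * nat)%type.
Definition term := (monom * int)%type.

Definition term_mul (t1 t2 : term) : term :=
  let: (w1, e1, d1, s1, k1) := t1 in let: (w2, e2, d2, s2, k2) := t2 in
  (w1 ++ w2, e1 + e2, (d1 + d2)%N, (s1 + s2)%N, k1 * k2).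

Definition term_opp (t : term) : term := (t.1, - t.2).

Fixpoint add_term (t : term) (p : seq term) : seq term :=
  match p with
  | [::] => if t.2 == 0 then [::] else [:: t]
  | t' :: p' =>
      if t'.1 == t.1 then (if t'.2 + t.2 == 0 then p' else (t.1, t'.2 + t.2) :: p')
      else t' :: add_term t p'
  end.

Definition normalize (p : seq term) : seq term := foldr add_term [::] p.

Definition poly_mul (p1 p2 : seq term) : seq term :=
  normalize [seq term_mul t1 t2 | t1 <- p1, t2 <- p2].

Arguments term_mul : simpl never.
Arguments normalize : simpl never.
Arguments poly_mul : simpl never.

Definition monom1 (w : seq nat) : term := (w, 0, 0%N, 0%N, 1).

Fixpoint poly_of_cexpr (s : cexpr) : seq term :=
  match s with
  | CPow z => [:: ([::], z, 0%N, 0%N, 1)]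
  | CInvDiff => [:: ([::], 0, 1%N, 0%N, 1)]
  | CInvSum => [:: ([::], 0, 0%N, 1%N, 1)]
  | C0 => [::]
  | C1 => [:: monom1 [::]]
  | CAdd a b => normalize (poly_of_cexpr a ++ poly_of_cexpr b)
  | COpp a => map term_opp (poly_of_cexpr a)
  | CMul a b => poly_mul (poly_of_cexpr a) (poly_of_cexpr b)
  end.

Fixpoint poly_of_ncexpr (t : ncexpr) : seq term :=
  match t with
  | NVar i => [:: monom1 [:: i]]
  | N0 => [::]
  | N1 => [:: monom1 [::]]
  | NAdd a b => normalize (poly_of_ncexpr a ++ poly_of_ncexpr b)
  | NOpp a => map term_opp (poly_of_ncexpr a)
  | NMul a b => poly_mul (poly_of_ncexpr a) (poly_of_ncexpr b)
  | NScale s a => poly_mul (poly_of_cexpr s) (poly_of_ncexpr a)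
  end.

Fixpoint word_of (t : ncexpr) : option (seq nat) :=
  match t with
  | NVar i => Some [:: i]
  | N1 => Some [::]
  | NMul a b => if word_of a is Some u then omap (cat u) (word_of b) else None
  | _ => None
  end.

Fixpoint split_factor (l w : seq nat) : option (seq nat * seq nat) :=
  if take (size l) w == l then Some ([::], drop (size l) w) else
  if w is x :: w' then omap (fun uv => (x :: uv.1, uv.2)) (split_factor l w') else None.

(* A rule [(w, p)] rewrites the word [w], wherever it occurs, into [p]. *)
Definition rule := (seq nat * seq term)%type.

Fixpoint compile_rules (rs : seq (ncexpr * ncexpr)) : seq rule :=
  if rs is (l, r) :: rs' then
    if word_of l is Some w then (w, poly_of_ncexpr r) :: compile_rules rs'
    else compile_rules rs'
  else [::].

Fixpoint rewrite_term (rs : seq rule) (t : term) : option (seq term) :=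
  if rs is (l, p) :: rs' then
    if l is [::] then rewrite_term rs' t else
    if split_factor l t.1.1.1.1 is Some (u, v) then
      Some [seq term_mul (term_mul (u, t.1.1.1.2, t.1.1.2, t.1.2, t.2) s) (monom1 v) | s <- p]
    else rewrite_term rs' t
  else None.

Fixpoint rewrite_step (rs : seq rule) (p : seq term) : bool * seq term :=
  if p is t :: p' then
    let: (b, p'') := rewrite_step rs p' in
    if rewrite_term rs t is Some pt then (true, pt ++ p'') else (b, t :: p'')
  else (false, [::]).

Fixpoint rewrite_iter (rs : seq rule) (fuel : nat) (p : seq term) : seq term :=
  if fuel is f.+1 then
    let: (b, p') := rewrite_step rs p in if b then rewrite_iter rs f (normalize p') else p
  else p.

(* Coefficients of [(q + s q^-1) ^+ k] in the basis [q ^ (k - 2 j)]. *)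
Definition binom_expand (s : int) (k : nat) : seq (int * int) :=
  [seq ((k%:Z - (2 * j)%N%:Z)%R, (s ^+ j * ('C(k, j))%:Z)%R) | j <- iota 0 k.+1].

Arguments binom_expand : simpl never.

(* Rewrite [t] over the common denominator [(q - q^-1) ^+ D], resp. [(q + q^-1) ^+ M]. *)
Definition raise_diff (D : nat) (t : term) : seq term :=
  let: (w, e, d, s, k) := t in
  [seq (w, e + x.1, D, s, k * x.2) | x <- binom_expand (-1) (D - d)].
Definition raise_sum (M : nat) (t : term) : seq term :=
  let: (w, e, d, s, k) := t in
  [seq (w, e + x.1, d, M, k * x.2) | x <- binom_expand 1 (M - s)].

Definition max_diff (p : seq term) : nat := foldr (fun t => maxn t.1.1.2) 0%N p.
Definition max_sum (p : seq term) : nat := foldr (fun t => maxn t.1.2) 0%N p.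

Definition clear_denominators (p : seq term) : seq term :=
  let p1 := flatten (map (raise_diff (max_diff p)) p) in
  normalize (flatten (map (raise_sum (max_sum p1)) p1)).

Definition ncr_check (rs : seq (ncexpr * ncexpr)) (fuel : nat) (l r : ncexpr) : bool :=
  clear_denominators
    (rewrite_iter (compile_rules rs) fuel (poly_of_ncexpr (NAdd l (NOpp r)))) == [::].

Section Eval.
Variables (R : fieldType) (A : algType R) (q : R) (env : seq A).
Hypotheses (q_neq0 : q != 0) (qdiff_neq0 : q - q^-1 != 0) (qsum_neq0 : q + q^-1 != 0).

Definition eval_coef (m : monom) (k : int) : R :=
  let: (_, e, d, s) := m in k%:~R * q ^ e / (q - q^-1) ^+ d / (q + q^-1) ^+ s.

Definition eval_word (w : seq nat) : A := \prod_(i <- w) env`_i.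

Definition eval_term (t : term) : A := eval_coef t.1 t.2 *: eval_word t.1.1.1.1.

Definition eval_poly (p : seq term) : A := \sum_(t <- p) eval_term t.

Fixpoint eval_cexpr (s : cexpr) : R :=
  match s with
  | CPow z => q ^ z | CInvDiff => (q - q^-1)^-1 | CInvSum => (q + q^-1)^-1
  | C0 => 0 | C1 => 1
  | CAdd a b => eval_cexpr a + eval_cexpr b
  | COpp a => - eval_cexpr a
  | CMul a b => eval_cexpr a * eval_cexpr b
  end.

Fixpoint eval_ncexpr (t : ncexpr) : A :=
  match t with
  | NVar i => env`_i | N0 => 0 | N1 => 1
  | NAdd a b => eval_ncexpr a + eval_ncexpr b
  | NOpp a => - eval_ncexpr a
  | NMul a b => eval_ncexpr a * eval_ncexpr b
  | NScale s a => eval_cexpr s *: eval_ncexpr a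
  end.

Fixpoint rules_hold (rs : seq (ncexpr * ncexpr)) : Prop :=
  if rs is (l, r) :: rs' then eval_ncexpr l = eval_ncexpr r /\ rules_hold rs' else True.

Fixpoint rules_imply (rs : seq (ncexpr * ncexpr)) (G : Prop) : Prop :=
  if rs is (l, r) :: rs' then eval_ncexpr l = eval_ncexpr r -> rules_imply rs' G else G.

Lemma rules_implyP rs (G : Prop) : (rules_hold rs -> G) -> rules_imply rs G.
Proof.
by elim: rs => [|[l r] rs IH] /= hG; [exact: hG | move=> hlr; apply: IH => ?; apply: hG].
Qed.

Lemma eval_word_cat u v : eval_word (u ++ v) = eval_word u * eval_word v.
Proof. exact: big_cat. Qed.

Lemma eval_poly_cat p1 p2 : eval_poly (p1 ++ p2) = eval_poly p1 + eval_poly p2.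
Proof. exact: big_cat. Qed.

Lemma eval_poly_cons t p : eval_poly (t :: p) = eval_term t + eval_poly p.
Proof. exact: big_cons. Qed.

Lemma eval_poly_map (T : Type) (f : T -> term) l :
  eval_poly (map f l) = \sum_(x <- l) eval_term (f x).
Proof. exact: big_map. Qed.

Lemma eval_term_monom1 w : eval_term (monom1 w) = eval_word w.
Proof. by rewrite /eval_term /= mul1r expr0z !expr0 !divr1 scale1r. Qed.

Lemma eval_term_mul t1 t2 : eval_term (term_mul t1 t2) = eval_term t1 * eval_term t2.
Proof.
case: t1 t2 => [[[[w1 e1] d1] s1] k1] [[[[w2 e2] d2] s2] k2].
rewrite /eval_term /= eval_word_cat -scalerAl -scalerAr scalerA; congr (_ *: _).
by rewrite intrM expfzDr // !exprD !invfM; ring.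
Qed.

Lemma eval_term_opp t : eval_term (term_opp t) = - eval_term t.
Proof. by case: t => [[[[w e] d] s] k]; rewrite /eval_term /= mulrNz !mulNr scaleNr. Qed.

Lemma eval_poly_opp p : eval_poly (map term_opp p) = - eval_poly p.
Proof. by rewrite /eval_poly big_map -sumrN; apply: eq_bigr => t _; apply: eval_term_opp. Qed.

Lemma eval_term_addk (m : monom) k1 k2 :
  eval_term (m, k1 + k2) = eval_term (m, k1) + eval_term (m, k2).
Proof. by case: m => [[[w e] d] s]; rewrite /eval_term /= intrD !mulrDl scalerDl. Qed.

Lemma eval_term_k0 (m : monom) : eval_term (m, 0) = 0.
Proof. by case: m => [[[w e] d] s]; rewrite /eval_term /= !mul0r scale0r. Qed.

Lemma eval_add_term t p : eval_poly (add_term t p) = eval_term t + eval_poly p.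
Proof.
rewrite /eval_poly; elim: p => [|t' p IH] /=.
  case: t => m k /=; case: eqP => [->|_]; first by rewrite eval_term_k0 big_nil addr0.
  by rewrite big_seq1 big_nil addr0.
rewrite big_cons; case: eqP => [em|_]; last by rewrite big_cons IH addrCA.
move: em; clear IH; case: t => m k; case: t' => m' k' /= ->.
rewrite addrA -eval_term_addk [k + k']addrC.
by case: eqP => [->|_]; rewrite ?eval_term_k0 ?add0r ?big_cons.
Qed.

Lemma eval_normalize p : eval_poly (normalize p) = eval_poly p.
Proof.
elim: p => [|t p IH] //=; by rewrite eval_add_term IH /eval_poly big_cons.
Qed.

Lemma eval_poly_mul p1 p2 : eval_poly (poly_mul p1 p2) = eval_poly p1 * eval_poly p2.
Proof.
rewrite /poly_mul eval_normalize /eval_poly big_allpairs_dep mulr_suml.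
by apply: eq_bigr => t1 _; rewrite mulr_sumr; apply: eq_bigr => t2 _; apply: eval_term_mul.
Qed.

Lemma eval_poly_of_cexpr s : eval_poly (poly_of_cexpr s) = eval_cexpr s *: 1.
Proof.
elim: s => [z||||| a IHa b IHb|a IHa|a IHa b IHb] /=;
  rewrite ?eval_poly_mul ?eval_normalize ?eval_poly_cat ?eval_poly_opp ?IHa ?IHb.
- by rewrite /eval_poly big_seq1 /eval_term /eval_word big_nil /= mul1r !divr1.
- by rewrite /eval_poly big_seq1 /eval_term /eval_word big_nil /= mul1r expr0z divr1 mul1r.
- by rewrite /eval_poly big_seq1 /eval_term /eval_word big_nil /= mul1r expr0z divr1 mul1r.
- by rewrite /eval_poly big_nil scale0r.
- by rewrite /eval_poly big_seq1 eval_term_monom1 /eval_word big_nil scale1r.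
- by rewrite scalerDl.
- by rewrite scaleNr.
- by rewrite -scalerAl mul1r scalerA.
Qed.

Lemma eval_poly_of_ncexpr t : eval_poly (poly_of_ncexpr t) = eval_ncexpr t.
Proof.
elim: t => [i||| a IHa b IHb|a IHa|a IHa b IHb|s a IHa] /=;
  rewrite ?eval_poly_mul ?eval_normalize ?eval_poly_cat ?eval_poly_opp ?IHa ?IHb //.
- by rewrite /eval_poly big_seq1 eval_term_monom1 /eval_word big_seq1.
- by rewrite /eval_poly big_nil.
- by rewrite /eval_poly big_seq1 eval_term_monom1 /eval_word big_nil.
- by rewrite eval_poly_of_cexpr -scalerAl mul1r.
Qed.

Lemma word_ofP t w : word_of t = Some w -> eval_ncexpr t = eval_word w.
Proof.
elim: t w => //= [i w [<-]|w [<-]|a IHa b IHb w]; rewrite /eval_word ?big_seq1 ?big_nil //.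
case Ea: (word_of a) => [u|] //; case Eb: (word_of b) => [v|] //= [<-].
by rewrite big_cat (IHa _ Ea) (IHb _ Eb).
Qed.

Fixpoint compiled_rules_hold (rs : seq rule) : Prop :=
  if rs is (w, p) :: rs' then eval_word w = eval_poly p /\ compiled_rules_hold rs' else True.

Lemma compile_rulesP rs : rules_hold rs -> compiled_rules_hold (compile_rules rs).
Proof.
elim: rs => [|[l r] rs IH] //= [hlr hrs].
case El: (word_of l) => [w|]; last exact: IH.
by split; [rewrite eval_poly_of_ncexpr -hlr (word_ofP El) | exact: IH].
Qed.

Lemma split_factorP l w u v : split_factor l w = Some (u, v) -> w = u ++ l ++ v.
Proof.
elim: w u v => [|x w IH] u v /=; case: eqP => [e [<- <-]|_] //=.
- by rewrite -e.
- by rewrite -{1}(cat_take_drop (size l) (x :: w)) e.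
- by case E: (split_factor l w) => [[u' v']|] //= [<- <-]; rewrite (IH _ _ E).
Qed.

Lemma rewrite_termP rs t pt :
  compiled_rules_hold rs -> rewrite_term rs t = Some pt -> eval_poly pt = eval_term t.
Proof.
elim: rs => [|[l p] rs IH] //= [hl hrs].
case: l hl => [|x l] hl; first exact: IH.
case E: split_factor => [[u v]|]; last exact: IH.
move=> [<-]; rewrite /eval_poly big_map.
under eq_bigr do rewrite !eval_term_mul eval_term_monom1.
rewrite -mulr_suml -mulr_sumr -/(eval_poly p) -hl; clear IH.
case: t E => [[[[w e] d] s] k] /= /split_factorP ->.
by rewrite /eval_term /= -cat_cons !eval_word_cat -!scalerAl mulrA.
Qed.

Lemma rewrite_stepP rs p : compiled_rules_hold rs -> eval_poly (rewrite_step rs p).2 = eval_poly p.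
Proof.
move=> hrs; elim: p => [|t p IH] //=.
case: (rewrite_step rs p) IH => b p' /= IH.
case E: rewrite_term => [pt|] /=; rewrite !eval_poly_cons -IH //.
by rewrite eval_poly_cat (rewrite_termP hrs E).
Qed.

Lemma rewrite_iterP rs fuel p :
  compiled_rules_hold rs -> eval_poly (rewrite_iter rs fuel p) = eval_poly p.
Proof.
move=> hrs; elim: fuel p => [|f IH] p //=.
have := rewrite_stepP p hrs; case: (rewrite_step rs p) => [[] p'] //= <-.
by rewrite IH eval_normalize.
Qed.

Lemma qpow_binom k j : (j <= k)%N ->
  q ^+ (k - j) * q^-1 ^+ j = q ^ (k%:Z - (2 * j)%N%:Z).
Proof.
move=> hj; rewrite exprVn exprnN -[q ^+ (k - j)]/(q ^ (k - j)%N) -expfzDr //.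
by congr (q ^ _); lia.
Qed.

Lemma binom_expandE (s : int) k :
  \sum_(x <- binom_expand s k) x.2%:~R * q ^ x.1 = (q + s%:~R * q^-1) ^+ k.
Proof.
rewrite exprDn /binom_expand big_map.
rewrite -(big_mkord xpredT (fun j => q ^+ (k - j) * (s%:~R * q^-1) ^+ j *+ 'C(k, j))).
rewrite /index_iota subn0; apply: eq_big_seq => j; rewrite mem_iota => /andP[_ /= hj].
rewrite exprMn mulrCA qpow_binom // -mulr_natr intrM rmorphXn /=.
by rewrite mulrAC.
Qed.

Lemma eval_raise_diff D t : (t.1.1.2 <= D)%N -> eval_poly (raise_diff D t) = eval_term t.
Proof.
case: t => [[[[w e] d] s] k] hd.
rewrite [raise_diff _ _]/raise_diff eval_poly_map /eval_term /= -scaler_suml.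
congr (_ *: _); set dq := q - q^-1.
have -> : k%:~R * q ^ e / dq ^+ d = k%:~R * q ^ e * (q + (-1)%:~R * q^-1) ^+ (D - d) / dq ^+ D.
  by rewrite mulN1r -{2}(subnK hd) exprD invfM mulrA mulfK // expf_neq0.
rewrite -binom_expandE mulr_sumr !mulr_suml; apply: eq_bigr => x _.
by rewrite intrM expfzDr //; ring.
Qed.

Lemma eval_raise_sum M t : (t.1.2 <= M)%N -> eval_poly (raise_sum M t) = eval_term t.
Proof.
case: t => [[[[w e] d] s] k] hs.
rewrite [raise_sum _ _]/raise_sum eval_poly_map /eval_term /= -scaler_suml.
congr (_ *: _); set sq := q + q^-1.
have -> : k%:~R * q ^ e / (q - q^-1) ^+ d / sq ^+ s =
          k%:~R * q ^ e / (q - q^-1) ^+ d * (q + 1%:~R * q^-1) ^+ (M - s) / sq ^+ M.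
  by rewrite mul1r -{2}(subnK hs) exprD invfM mulrA mulfK // expf_neq0.
rewrite -binom_expandE mulr_sumr !mulr_suml; apply: eq_bigr => x _.
by rewrite intrM expfzDr //; ring.
Qed.

Lemma eval_flatten_raise (raise : nat -> term -> seq term) (deg : term -> nat) N p :
  (forall t, (deg t <= N)%N -> eval_poly (raise N t) = eval_term t) ->
  (forall t, t \in p -> (deg t <= N)%N) ->
  eval_poly (flatten (map (raise N) p)) = eval_poly p.
Proof.
move=> hraise; elim: p => [|t p IH] //= hdeg.
rewrite eval_poly_cat eval_poly_cons hraise ?hdeg ?mem_head // IH // => t' ht'.
by rewrite hdeg // in_cons ht' orbT.
Qed.

Lemma leq_foldr_max (deg : term -> nat) p t :
  t \in p -> (deg t <= foldr (fun t => maxn (deg t)) 0 p)%N.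
Proof.
elim: p => [|t' p IH] //=; rewrite in_cons => /orP[/eqP<-|/IH]; first exact: leq_maxl.
by move/leq_trans; apply; apply: leq_maxr.
Qed.

Lemma eval_clear_denominators p : eval_poly (clear_denominators p) = eval_poly p.
Proof.
rewrite /clear_denominators eval_normalize.
rewrite (eval_flatten_raise (deg := fun t => t.1.2) (@eval_raise_sum _)); last first.
  by move=> t; apply: leq_foldr_max.
rewrite (eval_flatten_raise (deg := fun t => t.1.1.2) (@eval_raise_diff _)) //.
by move=> t; apply: leq_foldr_max.
Qed.
End Eval.

Lemma ncr_checkP (R : fieldType) (A : algType R) (q : R) (env : seq A)
    (rs : seq (ncexpr * ncexpr)) (fuel : nat) (l r : ncexpr) :
  q != 0 -> q - q^-1 != 0 -> q + q^-1 != 0 -> ncr_check rs fuel l r ->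
  rules_imply q env rs (eval_ncexpr q env l = eval_ncexpr q env r).
Proof.
move=> q_neq0 qdiff_neq0 qsum_neq0 /eqP hcheck; apply: rules_implyP => hrs.
apply/eqP; rewrite -subr_eq0 -[_ - _]/(eval_ncexpr q env (NAdd l (NOpp r))).
rewrite -eval_poly_of_ncexpr // -(rewrite_iterP _ fuel _ (compile_rulesP q_neq0 hrs)) //.
by rewrite -eval_clear_denominators // hcheck /eval_poly big_nil.
Qed.

Ltac ncr_index x env :=
  match env with
  | x :: _ => constr:(0%N)
  | _ :: ?env' => let i := ncr_index x env' in constr:(i.+1)
  | _ => fail 100 "ncr: atom not listed in the environment:" x
  end.

Ltac ncr_cexpr q s :=
  lazymatch s with
  | GRing.inv (q - q^-1) => constr:(CInvDiff)
  | GRing.inv (q + q^-1) => constr:(CInvSum)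
  | GRing.inv (GRing.exp q ?n) => constr:(CPow (Negz n.-1))
  | GRing.inv q => constr:(CPow (-1))
  | exprz q ?z => constr:(CPow z)
  | GRing.exp q ?n => constr:(CPow (Posz n))
  | q => constr:(CPow 1)
  | ?a + ?b => let x := ncr_cexpr q a in let y := ncr_cexpr q b in constr:(CAdd x y)
  | - ?a => let x := ncr_cexpr q a in constr:(COpp x)
  | ?a * ?b => let x := ncr_cexpr q a in let y := ncr_cexpr q b in constr:(CMul x y)
  | 1 => constr:(C1)
  | 0 => constr:(C0)
  | _ => fail 100 "ncr: unsupported scalar:" s
  end.

Ltac ncr_ncexpr q env t :=
  lazymatch t with
  | ?a + ?b => let x := ncr_ncexpr q env a in let y := ncr_ncexpr q env b in constr:(NAdd x y)
  | - ?a => let x := ncr_ncexpr q env a in constr:(NOpp x)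
  | ?a * ?b => let x := ncr_ncexpr q env a in let y := ncr_ncexpr q env b in constr:(NMul x y)
  | ?s *: ?a => let x := ncr_cexpr q s in let y := ncr_ncexpr q env a in constr:(NScale x y)
  | ?a ^+ 2 => let x := ncr_ncexpr q env a in constr:(NMul x x)
  | 0 => constr:(N0)
  | 1 => constr:(N1)
  | _ => let i := ncr_index t env in constr:(NVar i)
  end.

Ltac ncr_rules q env G :=
  lazymatch G with
  | (?l = ?r) -> ?G' =>
      let a := ncr_ncexpr q env l in let b := ncr_ncexpr q env r in
      let rs := ncr_rules q env G' in constr:((a, b) :: rs)
  | _ => constr:(@nil (ncexpr * ncexpr))
  end.

Ltac ncr_goal q env G :=
  lazymatch G with
  | _ -> ?G' => ncr_goal q env G'
  | ?l = ?r => let a := ncr_ncexpr q env l in let b := ncr_ncexpr q env r in constr:((a, b))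
  end.

(* [ncr q env] proves a goal [h1 -> ... -> hk -> l = r] between expressions in the atoms
   [env], with scalars built from [q], [(q - q^-1)^-1] and [(q + q^-1)^-1]: the [hi] whose
   left side is a monomial are used as rewrite rules, then denominators are cleared and all
   coefficients must vanish.  It needs [q], [q - q^-1] and [q + q^-1] nonzero in the context. *)
Ltac ncr q env :=
  lazymatch goal with |- ?G =>
    let rs := ncr_rules q env G in
    lazymatch ncr_goal q env G with (?a, ?b) =>
      refine (@ncr_checkP _ _ q env rs 1000%N a b _ _ _ _);
        [assumption | assumption | assumption | vm_compute; reflexivity]
    end
  end.

(** * q-commutators *)

Section QComm.
Variables (R : fieldType) (A : algType R) (c : R).

Lemma qcommA (u v w : A) : u * w = w * u ->
  qcomm c (qcomm c u v) w = qcomm c u (qcomm c v w).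
Proof.
move=> uw; rewrite /qcomm !(mulrBl, mulrBr) -!(scalerAl, scalerAr) !mulrA !scalerBr.
rewrite uw -[v * u * w]mulrA uw mulrA.
by rewrite !opprB addrACA [RHS]addrACA [- _ - _]addrC.
Qed.

Lemma qnest_cons (G : nat -> A) i s :
  s != [::] -> qnest c G (i :: s) = qcomm c (G i) (qnest c G s).
Proof. by case: s. Qed.

Lemma qnest_cat2 (G : nat -> A) s x y : (forall i, i \in s -> G i * G y = G y * G i) ->
  qnest c G (s ++ [:: x; y]) = qcomm c (qnest c G (s ++ [:: x])) (G y).
Proof.
elim: s => [|i s IH] // hs.
have [nex nexy] : s ++ [:: x] != [::] /\ s ++ [:: x; y] != [::] by case: s {IH hs}.
rewrite !cat_cons !qnest_cons // IH => [|j hj]; last by apply: hs; rewrite in_cons hj orbT.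
by rewrite qcommA // hs ?mem_head.
Qed.

Lemma qnest_map (G : nat -> A) (f : nat -> nat) s : qnest c (G \o f) s = qnest c G (map f s).
Proof.
elim: s => [|i s IH] //; case: s IH => [|j s] IH //.
by rewrite [LHS]qnest_cons // IH.
Qed.
End QComm.

Section QCommuteCalculus.
Variables (R : fieldType) (A : algType R) (q : R).
Hypothesis q_neq0 : q != 0.

Definition qcommute (z : int) (x y : A) : Prop := x * y = q ^ z *: (y * x).

Lemma qcommute0 (x y : A) : qcommute 0 x y <-> x * y = y * x.
Proof. by rewrite /qcommute expr0z scale1r. Qed.

Lemma qcommute_sym z (x y : A) : qcommute z x y -> qcommute (- z) y x.
Proof. by rewrite /qcommute => ->; rewrite scalerA -expfzDr // addNr expr0z scale1r. Qed.

Lemma qcommuteM z1 z2 (x a b : A) :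
  qcommute z1 x a -> qcommute z2 x b -> qcommute (z1 + z2) x (a * b).
Proof.
rewrite /qcommute expfzDr // => ha hb.
by rewrite mulrA ha -scalerAl -[a * x * b]mulrA hb -scalerAr scalerA mulrA.
Qed.

Lemma qcommute_qcomm c z1 z2 (x a b : A) :
  qcommute z1 x a -> qcommute z2 x b -> qcommute (z1 + z2) x (qcomm c a b).
Proof.
move=> ha hb; have hab := qcommuteM ha hb; have hba := qcommuteM hb ha.
rewrite /qcommute /qcomm mulrBr mulrBl -scalerAr -scalerAl hab.
by rewrite addrC in hba; rewrite hba scalerBr !scalerA mulrC.
Qed.

Lemma qcommuteBZ z c (x a b : A) :
  qcommute z x a -> qcommute z x b -> qcommute z x (a - c *: b).
Proof.
rewrite /qcommute => ha hb.
by rewrite mulrBr mulrBl -scalerAr -scalerAl ha hb scalerBr !scalerA mulrC.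
Qed.

Lemma qcommute_qnest c (G : nat -> A) (g : nat -> int) (x : A) s :
  (forall i, i \in s -> qcommute (g i) x (G i)) ->
  qcommute (\sum_(i <- s) g i) x (qnest c G s).
Proof.
elim: s => [|i s IH] hs; first by rewrite /qcommute mulr0 mul0r scaler0.
have hi := hs i (mem_head _ _).
have {}IH : qcommute (\sum_(j <- s) g j) x (qnest c G s).
  by apply: IH => j hj; apply: hs; rewrite in_cons hj orbT.
case: s IH hs => [|j s] IH hs; first by rewrite big_seq1.
by rewrite big_cons; apply: qcommute_qcomm.
Qed.
End QCommuteCalculus.

Lemma qnest_comm (R : fieldType) (A : algType R) c (G : nat -> A) x s :
  (forall i, i \in s -> x * G i = G i * x) -> x * qnest c G s = qnest c G s * x.
Proof.
move=> hs; have := @qcommute_qnest R A 1 (oner_neq0 R) c G (fun=> 0) x s.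
by rewrite big1 // => /(_ _)/qcommute0; apply=> i /hs /qcommute0.
Qed.

Lemma qcomm_comm (R : fieldType) (A : algType R) c (x a b : A) :
  x * a = a * x -> x * b = b * x -> x * qcomm c a b = qcomm c a b * x.
Proof.
move=> /qcommute0 xa /qcommute0 xb.
by have /qcommute0 := @qcommute_qcomm R A 1 (oner_neq0 R) c 0 0 x a b (xa 1) (xb 1).
Qed.

Ltac cartan_lia := rewrite /cartan; repeat (case: ifP => /=; try move/eqP); intros; lia.

Lemma cartanC i j : cartan i j = cartan j i.
Proof. by rewrite /cartan eq_sym orbC. Qed.

Lemma cartan_far i j : (i.+1 < j)%N || (j.+1 < i)%N -> cartan i j = 0.
Proof. cartan_lia. Qed.

Lemma cartan_eq2 i j : cartan i j = 2 -> i = j.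
Proof. cartan_lia. Qed.

Section Pairing.
Variable n : nat.

Lemma apairD i (mu la : 'rV[int]_n) : apair i (mu + la) = apair i mu + apair i la.
Proof. by rewrite /apair -big_split; apply: eq_bigr => j _; rewrite mxE. Qed.

Lemma apairN i (mu : 'rV[int]_n) : apair i (- mu) = - apair i mu.
Proof. by rewrite /apair -sumrN; apply: eq_bigr => j _; rewrite mxE. Qed.

Lemma sum_apairN s (mu : 'rV[int]_n) : \sum_(i <- s) apair i (- mu) = - \sum_(i <- s) apair i mu.
Proof. by rewrite -sumrN; apply: eq_bigr => i _; apply: apairN. Qed.

Lemma apair_alpha i j : (0 < i <= n)%N -> apair i (alpha n j) = cartan j i.
Proof.
case/andP=> i_gt0 i_le; have lt_i : (i.-1 < n)%N by lia.
rewrite /apair (big_pred1 (Ordinal lt_i)) => [|k]; last first.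
  by apply/eqP/eqP => [h|->]; [apply: val_inj => /=; lia | rewrite /=; lia].
by rewrite mxE /=; congr cartan; lia.
Qed.

Lemma apair_sum_alpha i s : (0 < i <= n)%N ->
  apair i (\sum_(j <- s) alpha n j) = \sum_(j <- s) cartan j i.
Proof.
move=> hi; elim: s => [|j s IH]; first by rewrite !big_nil /apair big1 // => k _; rewrite mxE.
by rewrite !big_cons apairD IH apair_alpha.
Qed.
End Pairing.

(** * Identities following from q-commutation relations *)

Section QIdentities.
Variables (R : fieldType) (A : algType R) (q : R).
Hypotheses (q_neq0 : q != 0) (qdiff_neq0 : q - q^-1 != 0) (qsum_neq0 : q + q^-1 != 0).

Definition serre (x y : A) : Prop := x * x * y = (q + q^-1) *: (x * y * x) - y * (x * x).

Lemma serre_mid (x y : A) : serre x y ->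
  x * y * x = (q + q^-1)^-1 *: (x * x * y + y * (x * x)).
Proof. by move->; rewrite subrK scalerA mulVf // scale1r. Qed.

Lemma serre_qcomm (e d y : A) : e * y = y * e -> serre e d -> serre e (qcomm q^-1 d y).
Proof. rewrite /serre /qcomm; ncr q [:: e; d; y]. Qed.

Lemma serre_qcommute (e t : A) : serre e t -> qcommute q 1 e (qcomm q^-1 e t).
Proof. rewrite /serre /qcommute /qcomm; ncr q [:: e; t]. Qed.

Lemma serre_qcomm_comm (a b t : A) : b * t = t * b -> serre a b -> serre a t ->
  a * qcomm q^-1 b (qcomm q^-1 a t) = qcomm q^-1 b (qcomm q^-1 a t) * a.
Proof. by move=> bt /serre_mid; rewrite /serre /qcomm; move: bt; ncr q [:: a; b; t]. Qed.

(* Inductive step for root vectors: if [e, f] and [M, N] satisfy the [sl_2]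
   relation, with [K1 = K_alpha] and [Kb = K_beta] for simple roots pairing to
   [-1], then so do [[e, M]_{q^-1}] and [[N, f]_q], with [K_{alpha + beta}]. *)
Lemma qcomm_sl2_step (e f M N K1 K1i Kb Kbi : A) :
  e * N = N * e -> M * f = f * M ->
  e * f = f * e + (q - q^-1)^-1 *: (K1 - K1i) ->
  M * N = N * M + (q - q^-1)^-1 *: (Kb - Kbi) ->
  qcommute q (-1) Kb e -> qcommute q 1 Kbi e -> qcommute q 1 Kb f -> qcommute q (-1) Kbi f ->
  qcommute q (-1) K1 M -> qcommute q 1 K1i M -> qcommute q 1 K1 N -> qcommute q (-1) K1i N ->
  qcommute q 0 Kb K1 -> qcommute q 0 Kbi K1 -> qcommute q 0 Kb K1i -> qcommute q 0 Kbi K1i ->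
  qcomm q^-1 e M * qcomm q N f =
  qcomm q N f * qcomm q^-1 e M + (q - q^-1)^-1 *: (K1 * Kb - K1i * Kbi).
Proof. rewrite /qcommute /qcomm; ncr q [:: e; M; N; f; Kb; Kbi; K1; K1i]. Qed.

Lemma Z_qcomm_relation (B1 Br Fx M L KX KXi : A) :
  qcommute q 0 M B1 -> qcommute q 0 M Br ->
  M * Fx = Fx * M + (q - q^-1)^-1 *: (KX - KXi) ->
  qcommute q 1 L B1 -> qcommute q (-2) L Br -> qcommute q 0 L Fx ->
  qcommute q 0 KX B1 -> qcommute q 1 KX Br -> qcommute q 0 KXi B1 -> qcommute q (-1) KXi Br ->
  qcommute q 0 KX L -> qcommute q 0 KXi L ->
  (- (1 - q ^- 2) *: (M * L)) * qcomm q B1 (qcomm q Br Fx) =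
  q^-1 *: (qcomm q B1 (qcomm q Br Fx) * (- (1 - q ^- 2) *: (M * L)))
  + (1 - q ^- 2) *: (qcomm q B1 Br * L * KX).
Proof. rewrite /qcommute /qcomm; ncr q [:: B1; Br; Fx; M; L; KX; KXi]. Qed.
End QIdentities.

(** * Consequences of the defining relations; root vectors of A-strings *)

Section Uq.
Variables (R : fieldType) (A : algType R) (n : nat) (q : R)
          (E F : nat -> A) (K : 'rV[int]_n -> A).
Hypothesis hU : Uq_relations q E F K.
Hypotheses (q_neq0 : q != 0) (qdiff_neq0 : q - q^-1 != 0) (qsum_neq0 : q + q^-1 != 0).

Local Notation node i := (0 < i <= n)%N.

Lemma Uq_KD mu la : K (mu + la) = K mu * K la.
Proof. by case: hU => _ []. Qed.

Lemma Uq_KK mu la : qcommute q 0 (K mu) (K la).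
Proof. by apply/qcommute0; rewrite -!Uq_KD addrC. Qed.

Lemma Uq_KE mu i : node i -> qcommute q (apair i mu) (K mu) (E i).
Proof. by case: hU => _ [_ [h _]]; apply: h. Qed.

Lemma Uq_KF mu i : node i -> qcommute q (- apair i mu) (K mu) (F i).
Proof. by case: hU => _ [_ [_ [h _]]]; apply: h. Qed.

Lemma Uq_EF i j : node i -> node j -> i != j -> E i * F j = F j * E i.
Proof.
case: hU => _ [_ [_ [_ [h _]]]] hi hj hij.
by apply/eqP; rewrite -subr_eq0 h // (negbTE hij).
Qed.

Lemma Uq_EF_diag i : node i ->
  E i * F i = F i * E i + (q - q^-1)^-1 *: (K (alpha n i) - K (- alpha n i)).
Proof.
case: hU => _ [_ [_ [_ [h _]]]] hi.
by have := h i i hi hi; rewrite eqxx => <-; rewrite addrC subrK.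
Qed.

Lemma Uq_EE i j : node i -> node j -> i != j -> cartan i j = 0 -> E i * E j = E j * E i.
Proof. by case: hU => _ [_ [_ [_ [_ h]]]] hi hj hij /(h i j hi hj hij).1 []. Qed.

Lemma Uq_FF i j : node i -> node j -> i != j -> cartan i j = 0 -> F i * F j = F j * F i.
Proof. by case: hU => _ [_ [_ [_ [_ h]]]] hi hj hij /(h i j hi hj hij).1 []. Qed.

Lemma Uq_serre i j : node i -> node j -> i != j -> cartan i j = -1 -> serre q (E i) (E j).
Proof.
case: hU => _ [_ [_ [_ [_ h]]]] hi hj hij /(h i j hi hj hij).2 [+ _].
rewrite /serre !expr2 => e; apply/eqP; rewrite -subr_eq0 -e.
by rewrite opprB addrA addrAC.
Qed.

Lemma qcommute_K_Enest c mu s : all (fun i => node i) s ->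
  qcommute q (\sum_(i <- s) apair i mu) (K mu) (qnest c E s).
Proof. by move=> /allP hs; apply: qcommute_qnest => // i /hs; apply: Uq_KE. Qed.

Lemma qcommute_K_Fnest c mu s : all (fun i => node i) s ->
  qcommute q (\sum_(i <- s) - apair i mu) (K mu) (qnest c F s).
Proof. by move=> /allP hs; apply: qcommute_qnest => // i /hs; apply: Uq_KF. Qed.

(* The nodes [h 0, ..., h k] span a subdiagram of type A_(k+1), in this order. *)
Definition Astring (h : nat -> nat) (k : nat) : Prop :=
  (forall i j, (i <= k)%N -> (j <= k)%N -> cartan (h i) (h j) = cartan i j) /\
  (forall i, (i <= k)%N -> node (h i)).

Section Astring.
Variables (h : nat -> nat) (k : nat).
Hypothesis hs : Astring h k.

Lemma Astring_node i : (i <= k)%N -> node (h i).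
Proof. exact: hs.2. Qed.

Lemma Astring_cartan i j : (i <= k)%N -> (j <= k)%N -> cartan (h i) (h j) = cartan i j.
Proof. exact: hs.1. Qed.

Lemma Astring_neq i j : (i <= k)%N -> (j <= k)%N -> i != j -> h i != h j.
Proof.
move=> hi hj; apply: contra => /eqP e; have := Astring_cartan hi hj.
by rewrite e /cartan eqxx => /esym/cartan_eq2 ->.
Qed.

Lemma Astring_EE i j : (i <= k)%N -> (j <= k)%N -> (i.+1 < j)%N || (j.+1 < i)%N ->
  E (h i) * E (h j) = E (h j) * E (h i).
Proof.
move=> hi hj hij; apply: Uq_EE; rewrite ?Astring_node ?Astring_cartan ?cartan_far //.
by apply: Astring_neq => //; apply/eqP; lia.
Qed.

Lemma Astring_FF i j : (i <= k)%N -> (j <= k)%N -> (i.+1 < j)%N || (j.+1 < i)%N ->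
  F (h i) * F (h j) = F (h j) * F (h i).
Proof.
move=> hi hj hij; apply: Uq_FF; rewrite ?Astring_node ?Astring_cartan ?cartan_far //.
by apply: Astring_neq => //; apply/eqP; lia.
Qed.

Lemma Astring_EF i j : (i <= k)%N -> (j <= k)%N -> i != j ->
  E (h i) * F (h j) = F (h j) * E (h i).
Proof. by move=> hi hj hij; apply: Uq_EF; rewrite ?Astring_node ?Astring_neq. Qed.

Lemma Astring_serre i j : (i <= k)%N -> (j <= k)%N -> (j == i.+1) || (i == j.+1) ->
  serre q (E (h i)) (E (h j)).
Proof.
move=> hi hj hij; apply: Uq_serre; rewrite ?Astring_node ?Astring_cartan //.
  by apply: Astring_neq => //; apply/eqP; lia.
by move: hij; cartan_lia.
Qed.
End Astring.

Lemma Astring_shift h k : Astring h k.+1 -> Astring (h \o S) k.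
Proof. by case=> h1 h2; split=> [i j hi hj|i hi] /=; [rewrite h1 | apply: h2]. Qed.

Definition Estring h k := qnest q^-1 E (map h (iota 0 k.+1)).
Definition Estring_rev h k := qnest q^-1 E (rev (map h (iota 0 k.+1))).
Definition Fstring_rev h k := qnest q F (rev (map h (iota 0 k.+1))).
Definition string_weight h k := \sum_(j <- map h (iota 0 k.+1)) alpha n j.

Lemma map_iotaS (h : nat -> nat) k :
  map h (iota 0 k.+1) = h 0%N :: map (h \o S) (iota 0 k).
Proof. by rewrite /= -[iota 1 k]/(iota (1 + 0) k) iotaDl -map_comp. Qed.

Lemma map_iota_rcons (h : nat -> nat) k :
  map h (iota 0 k.+1) = rcons (map h (iota 0 k)) (h k).
Proof. by rewrite -addn1 iotaD map_cat /= cats1. Qed.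

Lemma Estring_S h k : Estring h k.+1 = qcomm q^-1 (E (h 0%N)) (Estring (h \o S) k).
Proof. by rewrite /Estring map_iotaS qnest_cons //= map_iotaS. Qed.

Lemma Estring_rev_S h k : Estring_rev h k.+1 = qcomm q^-1 (E (h k.+1)) (Estring_rev h k).
Proof.
by rewrite /Estring_rev map_iota_rcons rev_rcons qnest_cons // map_iota_rcons rev_rcons.
Qed.

Lemma Fstring_rev_S h k : Astring h k.+1 ->
  Fstring_rev h k.+1 = qcomm q (Fstring_rev (h \o S) k) (F (h 0%N)).
Proof.
move=> hs; rewrite /Fstring_rev map_iotaS rev_cons map_iotaS rev_cons -!cats1 -catA /=.
rewrite qnest_cat2 // => z; rewrite mem_rev => /mapP [i]; rewrite mem_iota => /andP [_ hi] ->.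
by apply: (Astring_FF hs) => //=; lia.
Qed.

Lemma Estring_rcons h k : Astring h k.+1 ->
  Estring h k.+1 = qcomm q^-1 (Estring h k) (E (h k.+1)).
Proof.
move=> hs; rewrite /Estring map_iota_rcons map_iota_rcons -!cats1 -catA /=.
rewrite qnest_cat2 // => z /mapP [i]; rewrite mem_iota => /andP[_ hi] ->.
by apply: (Astring_EE hs); lia.
Qed.

Lemma Astring_all_nodes h k : Astring h k -> all (fun i => node i) (map h (iota 0 k.+1)).
Proof.
by move=> hs; apply/allP => z /mapP [i]; rewrite mem_iota => /andP[_ hi] ->; apply: hs.2.
Qed.

Lemma Astring_sum_cartan_head h k : Astring h k.+1 ->
  \sum_(j <- map (h \o S) (iota 0 k.+1)) cartan j (h 0%N) = -1.
Proof.
move=> hs; rewrite big_map /= big_cons (Astring_cartan hs) // big1_seq ?addr0.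
  by rewrite /cartan.
by move=> i /andP[_]; rewrite mem_iota => hi; rewrite (Astring_cartan hs) ?cartan_far //=; lia.
Qed.

Lemma Astring_apair_head h k : Astring h k.+1 ->
  apair (h 0%N) (string_weight (h \o S) k) = -1.
Proof.
by move=> hs; rewrite apair_sum_alpha ?(Astring_node hs) // Astring_sum_cartan_head.
Qed.

Lemma Astring_sum_apair_head h k : Astring h k.+1 ->
  \sum_(i <- map (h \o S) (iota 0 k.+1)) apair i (alpha n (h 0%N)) = -1.
Proof.
move=> hs; rewrite -(Astring_sum_cartan_head hs); apply: eq_big_seq => x /mapP [i hi ->].
rewrite apair_alpha 1?cartanC //.
by apply: (Astring_node hs); move: hi; rewrite mem_iota /=; lia.
Qed.

Lemma sl2_Estring_Fstring_rev h k : Astring h k ->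
  Estring h k * Fstring_rev h k =
  Fstring_rev h k * Estring h k +
  (q - q^-1)^-1 *: (K (string_weight h k) - K (- string_weight h k)).
Proof.
elim: k h => [|k IH] h hs.
  by rewrite /string_weight big_seq1; apply: Uq_EF_diag; apply: (Astring_node hs).
have hs' := Astring_shift hs; have h0 : node (h 0%N) by apply: (Astring_node hs).
have hb := Astring_apair_head hs; have hsum := Astring_sum_apair_head hs.
have hnodes := Astring_all_nodes hs'.
have hnodes_rev : all (fun i => node i) (rev (map (h \o S) (iota 0 k.+1))) by rewrite all_rev.
rewrite Estring_S Fstring_rev_S // /string_weight map_iotaS big_cons -/(string_weight _ _).
rewrite opprD !Uq_KD; apply: qcomm_sl2_step; rewrite ?IH //; try exact: Uq_KK.
- apply: qnest_comm => x; rewrite mem_rev => /mapP [i]; rewrite mem_iota => /andP[_ hi] ->.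
  by apply: (Astring_EF hs) => //; lia.
- apply/esym/qnest_comm => x /mapP [i]; rewrite mem_iota => /andP[_ hi] ->.
  by apply/esym/(Astring_EF hs) => //; lia.
- exact: Uq_EF_diag.
- by rewrite -hb; apply: Uq_KE.
- by have := Uq_KE (- string_weight (h \o S) k) h0; rewrite apairN hb.
- by have := Uq_KF (string_weight (h \o S) k) h0; rewrite hb.
- by have := Uq_KF (- string_weight (h \o S) k) h0; rewrite apairN hb.
- by rewrite -hsum; apply: qcommute_K_Enest.
- by have := qcommute_K_Enest q^-1 (- alpha n (h 0%N)) hnodes; rewrite sum_apairN hsum.
- by have := qcommute_K_Fnest q (alpha n (h 0%N)) hnodes_rev; rewrite big_rev sumrN hsum.
- have := qcommute_K_Fnest q (- alpha n (h 0%N)) hnodes_rev.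
  by rewrite big_rev sumrN sum_apairN opprK hsum.
Qed.

Lemma Astring_E_Estring_rev_far h N m i : Astring h N -> (m.+1 < i <= N)%N ->
  E (h i) * Estring_rev h m = Estring_rev h m * E (h i).
Proof.
move=> hs hi; apply: qnest_comm => x; rewrite mem_rev => /mapP [j]; rewrite mem_iota => hj ->.
by apply: (Astring_EE hs); lia.
Qed.

Lemma Astring_serre_Estring_rev h N m : Astring h N -> (m.+1 <= N)%N ->
  serre q (E (h m.+1)) (Estring_rev h m).
Proof.
move=> hs; case: m => [|m] hm; first exact: (Astring_serre hs (i := 1) (j := 0)).
rewrite Estring_rev_S; apply: serre_qcomm => //; last first.
  by apply: (Astring_serre hs); rewrite ?eqxx ?orbT //; lia.
by apply: (Astring_E_Estring_rev_far hs); lia.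
Qed.

Lemma Astring_E_Estring_rev h N m j : Astring h N -> (m <= N)%N -> (0 < j < m)%N ->
  E (h j) * Estring_rev h m = Estring_rev h m * E (h j).
Proof.
move=> hs; elim: m j => [|m IH] j hm hj; first by lia.
rewrite Estring_rev_S; have [ltjm|lejm] := ltnP j m.
  by apply: qcomm_comm; [apply: (Astring_EE hs); lia | apply: IH; lia].
have -> : j = m by lia.
case: m IH hm hj lejm => [|m] IH hm hj _; first by lia.
rewrite Estring_rev_S; apply: serre_qcomm_comm => //.
- by apply: (Astring_E_Estring_rev_far hs); lia.
- by apply: (Astring_serre hs); rewrite ?eqxx ?orbT //; lia.
- by apply: (Astring_serre_Estring_rev hs); lia.
Qed.

Lemma Estring_qcommute_Estring_rev h k : Astring h k.+1 ->
  qcommute q 1 (Estring (h \o S) k) (Estring_rev h k.+1).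
Proof.
case: k => [|k] hs.
  by rewrite Estring_rev_S; apply: serre_qcommute => //; apply: (Astring_serre_Estring_rev hs).
have TP : qcommute q 0 (Estring_rev h k.+2) (Estring (h \o S) k).
  apply/qcommute0/qnest_comm => x /mapP [i]; rewrite mem_iota => /andP[_ hi] -> /=.
  by apply/esym/(Astring_E_Estring_rev hs) => //; lia.
have Te : qcommute q (-1) (Estring_rev h k.+2) (E (h k.+2)).
  rewrite Estring_rev_S; apply: qcommute_sym => //.
  by apply: serre_qcommute => //; apply: (Astring_serre_Estring_rev hs).
have := qcommute_qcomm q_neq0 q^-1 TP Te; rewrite add0r => /(qcommute_sym q_neq0).
by rewrite opprK -Estring_rcons //; apply: Astring_shift.
Qed.
End Uq.

(** * The diagram automorphism *)

Lemma tauK n i : (i <= n.+1)%N -> tau n (tau n i) = i.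
Proof. by rewrite /tau; lia. Qed.

Lemma cartan_tau n i j : (i <= n.+1)%N -> (j <= n.+1)%N -> cartan (tau n i) (tau n j) = cartan i j.
Proof. by rewrite /tau; cartan_lia. Qed.

Lemma map_tau_iota n a m : (0 < a)%N -> (a + m <= n.+1)%N ->
  map (tau n) (iota a m) = rev (iota (n.+2 - (a + m)) m).
Proof.
move=> ha ham; apply: (@eq_from_nth _ 0%N); first by rewrite size_map size_rev !size_iota.
move=> i; rewrite size_map size_iota => hi.
by rewrite (nth_map 0%N) ?size_iota // nth_iota // nth_rev ?size_iota // nth_iota /tau; lia.
Qed.

Lemma map_tau_Xseq n r : map (tau n) (Xseq n r) = rev (Xseq n r).
Proof.
have [le2rn|lt_n2r] := leqP r.*2 n; last by rewrite /Xseq (_ : n - r.*2 = 0)%N //; lia.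
by rewrite /Xseq map_tau_iota //; [congr (rev (iota _ _)) | ]; lia.
Qed.

Section WeightTau.
Variable n : nat.

(* The diagram automorphism on weights: the coefficient of [varpi_i] in
   [wtau mu] is the coefficient of [varpi_(tau i)] in [mu]. *)
Definition wtau (mu : 'rV[int]_n) : 'rV[int]_n := \row_j mu 0 (rev_ord j).

Lemma wtau0 : wtau 0 = 0.
Proof. by apply/rowP => j; rewrite !mxE. Qed.

Lemma wtauD mu la : wtau (mu + la) = wtau mu + wtau la.
Proof. by apply/rowP => j; rewrite !mxE. Qed.

Lemma wtauN mu : wtau (- mu) = - wtau mu.
Proof. by apply/rowP => j; rewrite !mxE. Qed.

Lemma wtau_sum (s : seq nat) (f : nat -> 'rV[int]_n) :
  wtau (\sum_(j <- s) f j) = \sum_(j <- s) wtau (f j).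
Proof. by elim: s => [|j s IH]; rewrite ?big_nil ?wtau0 // !big_cons wtauD IH. Qed.

Lemma apair_wtau i mu : apair i (wtau mu) = apair (tau n i) mu.
Proof.
rewrite /apair (reindex_inj rev_ord_inj) /=; apply: eq_big => [j|j _]; last by rewrite mxE rev_ordK.
by apply/eqP/eqP; have := ltn_ord j; rewrite /= /tau; lia.
Qed.

Lemma wtau_alpha i : (i <= n.+1)%N -> wtau (alpha n i) = alpha n (tau n i).
Proof.
move=> hi; apply/rowP => j; have := ltn_ord j; rewrite !mxE /= => hj.
by rewrite -(cartan_tau (n := n) hi); [congr cartan; rewrite /tau | ]; lia.
Qed.
End WeightTau.

Lemma Uq_relations_tau (R : fieldType) (A : algType R) n q (E F : nat -> A)
    (K : 'rV[int]_n -> A) :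
  Uq_relations q E F K -> Uq_relations q (E \o tau n) (F \o tau n) (K \o @wtau n).
Proof.
have node_tau i : (0 < i <= n)%N -> (0 < tau n i <= n)%N by rewrite /tau; lia.
have eq_tau i j : (0 < i <= n)%N -> (0 < j <= n)%N -> (tau n i == tau n j) = (i == j).
  by move=> hi hj; apply/eqP/eqP; rewrite /tau; lia.
case=> K0 [KD [KE [KF [EF Serre]]]].
split; [|split; [|split; [|split; [|split]]]] => /=.
- by rewrite wtau0 K0.
- by move=> mu la; rewrite wtauD KD.
- by move=> mu i hi; rewrite KE ?node_tau // apair_wtau tauK //; lia.
- by move=> mu i hi; rewrite KF ?node_tau // apair_wtau tauK //; lia.
- move=> i j hi hj; rewrite EF ?node_tau // eq_tau //.
  by case: eqP => // ->; rewrite wtauN wtau_alpha //; lia.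
- move=> i j hi hj hij; rewrite -(cartan_tau (n := n)); try lia.
  by apply: Serre; rewrite ?node_tau ?eq_tau.
Qed.

Section GeneratorsTau.
Variables (R : fieldType) (A : algType R) (n r : nat) (q : R) (c : nat -> R)
          (E F : nat -> A) (K : 'rV[int]_n -> A).

Local Notation E' := (E \o tau n).
Local Notation F' := (F \o tau n).
Local Notation K' := (K \o @wtau n).
Local Notation c' := (c \o tau n).

Lemma EXp_tau : EXp n r q E' = EXm n r q E.
Proof. by rewrite /EXp /EXm qnest_map map_tau_Xseq. Qed.

Lemma EXm_tau : EXm n r q E' = EXp n r q E.
Proof. by rewrite /EXm /EXp qnest_map map_rev map_tau_Xseq revK. Qed.

Lemma FXp_tau : FXp n r q F' = FXm n r q F.
Proof. by rewrite /FXp /FXm qnest_map map_tau_Xseq. Qed.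

Lemma Lw_tau i : (i <= n.+1)%N -> Lw K' i = Lw K (tau n i).
Proof. by move=> hi; rewrite /Lw /= wtauD wtauN !wtau_alpha ?tauK //; rewrite /tau; lia. Qed.

Lemma KX_tau : KX r K' = KX r K.
Proof.
rewrite /KX /= wtau_sum -big_rev -map_tau_Xseq big_map; congr K; apply: eq_big_seq => j.
by rewrite /Xseq mem_iota => hj; rewrite wtau_alpha ?tauK //; rewrite /tau; lia.
Qed.

Lemma Bgen_tau i : (i <= n.+1)%N -> Bgen c' E' F' K' i = Bgen c E F K (tau n i).
Proof.
by move=> hi; rewrite /Bgen /Kinv /= wtauN wtau_alpha ?tauK.
Qed.

Lemma Br_tau : (r <= n.+1)%N -> Br r q c' E' F' K' = Btr r q c E F K.
Proof.
by move=> hr; rewrite /Br /Btr /Kinv /= EXp_tau tauK // wtauN wtau_alpha.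
Qed.
End GeneratorsTau.

(** * The relation for Z_tau(r) *)

Lemma sum_cartan_far a m i : (i.+1 < a)%N || (a + m < i)%N ->
  \sum_(j <- iota a m) cartan j i = 0.
Proof.
move=> hi; rewrite big1_seq // => j /andP[_]; rewrite mem_iota => hj.
by apply: cartan_far; lia.
Qed.

Lemma sum_cartan_left a m : (0 < a)%N -> (0 < m)%N -> \sum_(j <- iota a m) cartan j a.-1 = -1.
Proof.
move=> ha; case: m => [|m] // _; rewrite /= big_cons sum_cartan_far; last by lia.
by rewrite addr0; cartan_lia.
Qed.

Lemma sum_cartan_right a m : (0 < m)%N -> \sum_(j <- iota a m) cartan j (a + m) = -1.
Proof.
case: m => [|m] // _; rewrite -addn1 iotaD big_cat big_seq1 sum_cartan_far; last by lia.
by cartan_lia.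
Qed.

Lemma sum_sum_cartan a m : (0 < m)%N -> \sum_(i <- iota a m) \sum_(j <- iota a m) cartan j i = 2.
Proof.
elim: m => [|m IH] // _; case: m IH => [|m] IH; first by rewrite !big_seq1 /cartan eqxx.
rewrite -[m.+2]addn1 iotaD big_cat big_seq1.
under eq_bigr do rewrite big_cat big_seq1.
rewrite big_split IH // big_cat big_seq1 sum_cartan_right //.
under eq_bigr do rewrite cartanC.
by rewrite sum_cartan_right // /cartan eqxx.
Qed.

Section FirstRelation.
Variables (R : fieldType) (A : algType R) (n r : nat) (q : R) (c : nat -> R)
          (E F : nat -> A) (K : 'rV[int]_n -> A).
Hypothesis hU : Uq_relations q E F K.
Hypotheses (q_neq0 : q != 0) (qdiff_neq0 : q - q^-1 != 0) (qsum_neq0 : q + q^-1 != 0).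
Hypotheses (r_ge2 : (2 <= r)%N) (n_gt2r : (r.*2 < n)%N).

Local Notation node i := (0 < i <= n)%N.
Local Notation X := (Xseq n r).
Local Notation m := (n - r.*2)%N.

Lemma mem_X i : i \in X -> (r < i <= n - r)%N.
Proof. by rewrite /Xseq mem_iota; lia. Qed.

Lemma X_nodes : all (fun i => node i) X.
Proof. by apply/allP => i /mem_X; lia. Qed.

Lemma sumX_cartan_far i : (i < r)%N || (tau n r < i)%N -> \sum_(j <- X) cartan j i = 0.
Proof. by move=> hi; apply: sum_cartan_far; rewrite /tau in hi; lia. Qed.

Lemma sumX_cartan_r : \sum_(j <- X) cartan j r = -1.
Proof. by apply: (sum_cartan_left (a := r.+1)); lia. Qed.

Lemma sumX_cartan_tau_r : \sum_(j <- X) cartan j (tau n r) = -1.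
Proof. by rewrite /tau (_ : n.+1 - r = r.+1 + m)%N; [apply: sum_cartan_right | ]; lia. Qed.

Lemma sumX_apair_alpha j : \sum_(i <- X) apair i (alpha n j) = \sum_(i <- X) cartan i j.
Proof.
by apply: eq_big_seq => i /mem_X hi; rewrite apair_alpha 1?cartanC //; lia.
Qed.

Lemma sumX_apair_weight : \sum_(i <- X) apair i (\sum_(j <- X) alpha n j) = 2.
Proof.
rewrite -(@sum_sum_cartan r.+1 m); last by lia.
by apply: eq_big_seq => i /mem_X hi; rewrite apair_sum_alpha //; lia.
Qed.

Lemma Astring_down b k : (k < b)%N -> (b <= n)%N -> Astring n (fun i => b - i)%N k.
Proof.
move=> hk hb; split=> [i j hi hj|i hi]; last by lia.
by rewrite cartanC /cartan; repeat case: eqP; lia.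
Qed.

Lemma map_down_X : map (fun i => n - r - i)%N (iota 0 m) = rev X.
Proof.
rewrite -map_tau_Xseq /Xseq -[r.+1]addn0 iotaDl -map_comp.
by apply/eq_in_map => i; rewrite mem_iota /= /tau; lia.
Qed.

Lemma EXm_FXp :
  EXm n r q E * FXp n r q F = FXp n r q F * EXm n r q E +
  (q - q^-1)^-1 *: (K (\sum_(j <- X) alpha n j) - K (- \sum_(j <- X) alpha n j)).
Proof.
have hs : Astring n (fun i => n - r - i)%N m.-1 by apply: Astring_down; lia.
have := sl2_Estring_Fstring_rev hU q_neq0 qdiff_neq0 qsum_neq0 hs.
by rewrite /Estring /Fstring_rev /string_weight prednK ?map_down_X ?revK ?big_rev //; lia.
Qed.

Lemma EXm_qcommute_EXp_E :
  qcommute q 1 (EXm n r q E) (qcomm q^-1 (EXp n r q E) (E (tau n r))).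
Proof.
have hs : Astring n (fun i => tau n r - i)%N m.-1.+1 by apply: Astring_down; rewrite /tau; lia.
have := Estring_qcommute_Estring_rev hU q_neq0 qdiff_neq0 qsum_neq0 hs.
have -> : Estring q E ((fun i => tau n r - i)%N \o S) m.-1 = EXm n r q E.
  rewrite /Estring /EXm prednK -?map_down_X; last by lia.
  by congr qnest; apply: eq_map => i /=; rewrite /tau; lia.
rewrite /Estring_rev map_iotaS prednK -?map_down_X; last by lia.
rewrite (eq_map (_ : (fun i => tau n r - i.+1)%N =1 (fun i => n - r - i)%N)); last first.
  by move=> i; rewrite /tau; lia.
rewrite map_down_X rev_cons revK subn0 /EXp /Xseq.
have -> : m = (m.-1).+1 by lia.
rewrite -cats1 -[m.-1.+1]addn1 iotaD -catA /= qnest_cat2 //.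
move=> i; rewrite mem_iota => hi; apply: (Uq_EE hU); rewrite /tau; try lia.
by apply: cartan_far; lia.
Qed.

Lemma apair_alpha_diff i x y : node i ->
  apair i (alpha n x - alpha n y) = cartan x i - cartan y i.
Proof. by move=> hi; rewrite apairD apairN !apair_alpha. Qed.

Lemma qcommute_K_Bgen mu i z : node i -> node (tau n i) ->
  - apair i mu = z -> apair (tau n i) mu = z -> qcommute q z (K mu) (Bgen c E F K i).
Proof.
move=> hi hti hF hE; apply: qcommuteBZ; first by rewrite -hF; apply: (Uq_KF hU).
by rewrite -[z]addr0; apply: qcommuteM => //; [rewrite -hE; apply: (Uq_KE hU) | apply: (Uq_KK hU)].
Qed.

Lemma qcommute_K_Br mu z : - apair r mu = z ->
  \sum_(i <- X) apair i mu + apair (tau n r) mu = z -> qcommute q z (K mu) (Br r q c E F K).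
Proof.
move=> hF hE; apply: qcommuteBZ; first by rewrite -hF; apply: (Uq_KF hU) => //; lia.
rewrite -[z]addr0 -hE; apply: qcommuteM => //; last exact: (Uq_KK hU).
apply: qcommute_qcomm => //; first exact: (qcommute_K_Enest hU q_neq0 _ _ X_nodes).
by apply: (Uq_KE hU); rewrite /tau; lia.
Qed.

Lemma EXm_F_comm j : node j -> j \notin X -> EXm n r q E * F j = F j * EXm n r q E.
Proof.
move=> hj jX; apply/esym/qnest_comm => i; rewrite mem_rev => iX.
apply/esym/(Uq_EF hU) => //; last by apply: contraNneq jX => <-.
by move/mem_X: iX; lia.
Qed.

Lemma EXm_K_qcommute mu :
  qcommute q (\sum_(i <- X) apair i (- mu)) (EXm n r q E) (K mu).
Proof.
have hX : all (fun i => node i) (rev X) by rewrite all_rev X_nodes.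
have := qcommute_sym q_neq0 (qcommute_K_Enest hU q_neq0 q^-1 mu hX).
by rewrite big_rev sum_apairN.
Qed.

Lemma EXm_B1 : qcommute q 0 (EXm n r q E) (Bgen c E F K r.-1).
Proof.
apply: qcommuteBZ; first by apply/qcommute0/EXm_F_comm; [lia | apply/negP => /mem_X; lia].
have EXm_E : qcommute q 0 (EXm n r q E) (E (tau n r.-1)).
  apply/qcommute0/esym/qnest_comm => i; rewrite mem_rev => /mem_X hi.
  by apply: (Uq_EE hU); rewrite /tau; try lia; apply: cartan_far; lia.
have := EXm_K_qcommute (- alpha n r.-1); rewrite opprK sumX_apair_alpha sumX_cartan_far; last lia.
by move/(qcommuteM q_neq0 EXm_E).
Qed.

Lemma EXm_Br : qcommute q 0 (EXm n r q E) (Br r q c E F K).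
Proof.
apply: qcommuteBZ; first by apply/qcommute0/EXm_F_comm; [lia | apply/negP => /mem_X; lia].
have := EXm_K_qcommute (- alpha n r); rewrite opprK sumX_apair_alpha sumX_cartan_r.
by move/(qcommuteM q_neq0 EXm_qcommute_EXp_E).
Qed.

Lemma Lw_B1 : qcommute q 1 (Lw K r) (Bgen c E F K r.-1).
Proof.
by apply: qcommute_K_Bgen; rewrite ?apair_alpha_diff /tau; try lia; cartan_lia.
Qed.

Lemma sumX_apair_alpha_diff x y :
  \sum_(i <- X) apair i (alpha n x - alpha n y) =
  \sum_(i <- X) cartan i x - \sum_(i <- X) cartan i y.
Proof.
by rewrite -!sumX_apair_alpha -sumrB; apply: eq_bigr => i _; rewrite apairD apairN.
Qed.

Lemma Lw_Br : qcommute q (-2) (Lw K r) (Br r q c E F K).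
Proof.
apply: qcommute_K_Br; rewrite ?sumX_apair_alpha_diff ?sumX_cartan_r ?sumX_cartan_tau_r.
all: by rewrite apair_alpha_diff /tau; try lia; cartan_lia.
Qed.

Lemma Lw_FXp : qcommute q 0 (Lw K r) (FXp n r q F).
Proof.
have := qcommute_K_Fnest hU q_neq0 q (alpha n r - alpha n (tau n r)) X_nodes.
by rewrite sumrN sumX_apair_alpha_diff sumX_cartan_r sumX_cartan_tau_r subrr oppr0.
Qed.

Lemma KX_B1 : qcommute q 0 (KX r K) (Bgen c E F K r.-1).
Proof.
by apply: qcommute_K_Bgen; rewrite ?apair_sum_alpha ?sumX_cartan_far /tau //; lia.
Qed.

Lemma KX_Br : qcommute q 1 (KX r K) (Br r q c E F K).
Proof.
apply: qcommute_K_Br; first by rewrite apair_sum_alpha ?sumX_cartan_r //; lia.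
by rewrite sumX_apair_weight apair_sum_alpha ?sumX_cartan_tau_r // /tau; lia.
Qed.

Lemma KXi_B1 : qcommute q 0 (K (- \sum_(j <- X) alpha n j)) (Bgen c E F K r.-1).
Proof.
by apply: qcommute_K_Bgen; rewrite ?apairN ?apair_sum_alpha ?sumX_cartan_far /tau //; lia.
Qed.

Lemma KXi_Br : qcommute q (-1) (K (- \sum_(j <- X) alpha n j)) (Br r q c E F K).
Proof.
apply: qcommute_K_Br; first by rewrite apairN apair_sum_alpha ?sumX_cartan_r //; lia.
rewrite sum_apairN sumX_apair_weight apairN apair_sum_alpha ?sumX_cartan_tau_r // /tau; lia.
Qed.

Theorem Ztau_S_relation :
  let S := qcomm q (Bgen c E F K r.-1) (qcomm q (Br r q c E F K) (FXp n r q F)) in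
  let Z := - (1 - q ^- 2) *: (EXm n r q E * Lw K r) in
  Z * S = q^-1 *: (S * Z)
          + (1 - q ^- 2) *: (qcomm q (Bgen c E F K r.-1) (Br r q c E F K) * Lw K r * KX r K).
Proof.
exact: (Z_qcomm_relation q_neq0 qdiff_neq0 qsum_neq0 EXm_B1 EXm_Br EXm_FXp Lw_B1 Lw_Br Lw_FXp
  KX_B1 KX_Br KXi_B1 KXi_Br (Uq_KK hU _ _) (Uq_KK hU _ _)).
Qed.
End FirstRelation.

Lemma tofracX2_nondegenerate (Kf : fieldType) :
  let q := FracField.tofrac ('X : {poly Kf}) ^+ 2 in
  [/\ q != 0, q - q^-1 != 0 & q + q^-1 != 0].
Proof.
move=> q; have X_neq0 : FracField.tofrac ('X : {poly Kf}) != 0 by rewrite tofrac_eq0 polyX_eq0.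
have q_neq0 : q != 0 by rewrite expf_neq0.
have qq : q * q = FracField.tofrac ('X^4 : {poly Kf}) by rewrite /q -exprD tofracXn.
split; [exact: q_neq0 | apply/negP => /eqP h ..].
  have : q * q - 1 = 0 by rewrite -(divff q_neq0) -mulrBr h mulr0.
  rewrite qq -tofrac1 -tofracB => /eqP; rewrite tofrac_eq0 => /eqP e.
  by have := size_XnsubC (n := 4) (1 : Kf) isT; rewrite e size_poly0.
have : q * q + 1 = 0 by rewrite -(divff q_neq0) -mulrDr h mulr0.
rewrite qq -tofrac1 -tofracD => /eqP; rewrite tofrac_eq0 => /eqP e.
by have := size_XnaddC (n := 4) (1 : Kf) isT; rewrite polyC1 e size_poly0.
Qed.

Theorem lemmaA3
  (Kf : fieldType) (char0 : [pchar Kf] =i pred0)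
  (n r : nat) (hr2 : (2 <= r)%N) (hrn : (r.+1 <= uphalf n)%N)
  (c : nat -> {fraction {poly Kf}})
  (hc0 : forall i, (0 < i <= n)%N -> i \notin Xseq n r -> c i != 0)
  (hcs : forall i, (0 < i <= n)%N -> i \notin Xseq n r -> i != r ->
           i != tau n r -> c i = c (tau n i))
  (A : algType {fraction {poly Kf}})
  (E F : nat -> A) (K : 'rV[int]_n -> A)
  (hUq : Uq_relations ((FracField.tofrac ('X : {poly Kf})) ^+ 2) E F K) :
  let q := (FracField.tofrac ('X : {poly Kf})) ^+ 2 in
  let B1 := Bgen c E F K r.-1 in
  let Br := Br r q c E F K in
  let B1t := Bgen c E F K (tau n r.-1) in
  let Btr := Btr r q c E F K in
  let S := qcomm q B1 (qcomm q Br (FXp n r q F)) in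
  let St := qcomm q B1t (qcomm q Btr (FXm n r q F)) in
  let Zr := - (1 - q ^- 2) *: (EXp n r q E * Lw K (tau n r)) in
  let Ztr := - (1 - q ^- 2) *: (EXm n r q E * Lw K r) in
  Ztr * S = q^-1 *: (S * Ztr)
            + (1 - q ^- 2) *: (qcomm q B1 Br * Lw K r * KX r K)
  /\
  Zr * St = q^-1 *: (St * Zr)
            + (1 - q ^- 2) *: (qcomm q B1t Btr * Lw K (tau n r) * KX r K).
Proof.
(* The identities hold for arbitrary parameters [c] and in any characteristic. *)
have [q_neq0 qdiff_neq0 qsum_neq0] := tofracX2_nondegenerate Kf.
have n_gt2r : (r.*2 < n)%N by lia.
split; first exact: (Ztau_S_relation c hUq q_neq0 qdiff_neq0 qsum_neq0 hr2 n_gt2r).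
have := Ztau_S_relation (c \o tau n) (Uq_relations_tau hUq) q_neq0 qdiff_neq0 qsum_neq0 hr2 n_gt2r.
by rewrite !Bgen_tau ?Br_tau ?FXp_tau ?EXm_tau ?Lw_tau ?KX_tau //; lia.
Qed.
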